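(* A subset $\mathcal R$ of $\mathcal G$ is a $Z$-regulus if and only if the following three conditions hold: (D1) the elements of $\mathcal R$ are mutually distant and $|\mathcal R|\ge 3$; (D2) whenever $E_0,E_1,E_2\in\mathcal R$ are mutually distinct and $W\in\mathcal G$ is adjacent to $E_0$ and not distant from $E_1$ and not distant from $E_2$, then $W$ is not distant from any $E\in\mathcal R$; (D3) $\mathcal R$ is not properly contained in any subset of $\mathcal G$ satisfying (D1) and (D2).
   Context: $K$ is a (not necessarily commutative) field with centre $Z$, and $V$ is a left vector space over $K$ of arbitrary (possibly infinite) dimension with $\dim V>2$. $\mathcal G:=\{X\le V\mid X\cong V/X\}$, assumed nonempty. Points are $1$-dimensional and lines $2$-dimensional subspaces; two subspaces meet if they have a common point. $X,Y\in\mathcal G$ are adjacent if $\dim((X+Y)/X)=\dim((X+Y)/Y)=1$, and distant if $V=X\oplus Y$. A $Z$-regulus is a subset $\mathcal R\subseteq\mathcal G$ such that (R1) its elements are mutually distant and $|\mathcal R|\ge3$; (R2) if a line meets three mutually distinct elements of $\mathcal R$ then it meets all elements of $\mathcal R$; (R3) $\mathcal R$ is not properly contained in any subset of $\mathcal G$ satisfying (R1) and (R2). *)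

From mathcomp Require Import all_boot all_algebra.
Set Implicit Arguments. Unset Strict Implicit. Unset Printing Implicit Defensive.
Import GRing.Theory.
Local Open Scope ring_scope.

Definition division_ring (K : unitRingType) : Prop :=
  forall x : K, x != 0 -> x \is a GRing.unit.

Section Defs.
Variables (K : unitRingType) (V : lmodType K).

Definition subsp := V -> Prop.

Definition is_subspace (X : subsp) : Prop :=
  X 0 /\ forall (a : K) (x y : V), X x -> X y -> X (a *: x + y).

Definition sincl (X Y : subsp) : Prop := forall v, X v -> Y v.

Definition ssum (X Y : subsp) : subsp := fun v => exists x y, X x /\ Y y /\ v = x + y.
Definition sspan1 (v : V) : subsp := fun w => exists a : K, w = a *: v.

Definition dim_gt2 : Prop :=
  exists u v w : V, forall a b c : K, a *: u + b *: v + c *: w = 0 -> [/\ a = 0, b = 0 & c = 0].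

Definition is_point (P : subsp) : Prop := exists v : V, v != 0 /\ P = sspan1 v.
Definition is_line (L : subsp) : Prop :=
  exists u w : V, (forall a b : K, a *: u + b *: w = 0 -> a = 0 /\ b = 0) /\
    L = (fun x => exists a b : K, x = a *: u + b *: w).

Definition meets (X Y : subsp) : Prop :=
  exists P, is_point P /\ sincl P X /\ sincl P Y.

(* X \cong V/X, via the first isomorphism theorem: a linear surjection V -> X with kernel X *)
Definition iso_quot (X : subsp) : Prop :=
  exists f : V -> V,
    (forall u v, f (u + v) = f u + f v) /\ (forall (a : K) v, f (a *: v) = a *: f v) /\
    (forall w, X w <-> exists v, f v = w) /\ (forall v, f v = 0 <-> X v).

Definition inG (X : subsp) : Prop := is_subspace X /\ iso_quot X.

Definition codim1 (X S : subsp) : Prop :=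
  sincl X S /\ exists v, S v /\ ~ X v /\ S = ssum X (sspan1 v).

Definition adjacent (X Y : subsp) : Prop :=
  codim1 X (ssum X Y) /\ codim1 Y (ssum X Y).

Definition distant (X Y : subsp) : Prop :=
  (forall v, X v -> Y v -> v = 0) /\ (forall v, ssum X Y v).

Definition subsetG (R : subsp -> Prop) : Prop := forall X, R X -> inG X.

Definition R1 (R : subsp -> Prop) : Prop :=
  (forall X Y, R X -> R Y -> X <> Y -> distant X Y) /\
  exists X Y Z, [/\ R X, R Y, R Z & [/\ X <> Y, X <> Z & Y <> Z]].

Definition R2 (R : subsp -> Prop) : Prop :=
  forall L, is_line L -> forall E0 E1 E2, R E0 -> R E1 -> R E2 ->
    E0 <> E1 -> E0 <> E2 -> E1 <> E2 ->
    meets L E0 -> meets L E1 -> meets L E2 ->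
    forall E, R E -> meets L E.

Definition R3 (R : subsp -> Prop) : Prop :=
  forall S, subsetG S -> R1 S -> R2 S -> (forall X, R X -> S X) -> S = R.

Definition Z_regulus (R : subsp -> Prop) : Prop :=
  [/\ subsetG R, R1 R, R2 R & R3 R].

Definition D1 := R1.

Definition D2 (R : subsp -> Prop) : Prop :=
  forall E0 E1 E2, R E0 -> R E1 -> R E2 ->
    E0 <> E1 -> E0 <> E2 -> E1 <> E2 ->
    forall W, inG W -> adjacent W E0 -> ~ distant W E1 -> ~ distant W E2 ->
    forall E, R E -> ~ distant W E.

Definition D3 (R : subsp -> Prop) : Prop :=
  forall S, subsetG S -> D1 S -> D2 S -> (forall X, R X -> S X) -> S = R.

End Defs.

(* Under (R1) the conditions (R2) and (D2) are equivalent for every family of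
   elements of G; the maximality conditions (R3) and (D3) then coincide too.

   (R2) => (D2): let W be adjacent to E0 and not distant from E1, E2.  Then W
   meets E1 in a vector q and W = (W :&: E0) + Kq.  Every F distant from E0
   splits q as q = (e + q) - e with e in E0, e + q in F, and W is distant from
   F exactly when e is not in W.  Taking F = E2 gives p := e in W; the line
   <p, q> meets E0, E1, E2, hence by (R2) every E, which forces e_E in Kp.

   (D2) => (R2): if a line L meets E0, E1, E2 in p, q, r but misses E, write
   q = (e + q) - e with e in E0, e + q in E, and choose by Zorn a hyperplane M
   through p and q - e avoiding e.  The shear of V fixing M and sending e to q
   carries E0 to W = (M :&: E0) + Kq, an element of G adjacent to E0 and
   containing L, yet distant from E: this contradicts (D2). *)

From mathcomp Require Import all_boot all_algebra.
From mathcomp Require classical_sets.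
From Stdlib Require Import Classical FunctionalExtensionality PropExtensionality IndefiniteDescription.
Set Implicit Arguments. Unset Strict Implicit. Unset Printing Implicit Defensive.
Import GRing.Theory.
Local Open Scope ring_scope.

Section Regulus.
Variables (K : unitRingType) (V : lmodType K).
Hypothesis hK : division_ring K.

Lemma subsp_ext (X Y : subsp V) : (forall v, X v <-> Y v) -> X = Y.
Proof.
move=> h; apply: functional_extensionality => v.
by apply: propositional_extensionality; exact: h.
Qed.

Lemma mulVf_div (c : K) : c != 0 -> c^-1 * c = 1.
Proof. by move=> /hK; apply: mulVr. Qed.

Lemma scalerKV_div (c : K) (v : V) : c != 0 -> c^-1 *: (c *: v) = v.
Proof. by move=> hc; rewrite scalerA mulVf_div // scale1r. Qed.

Lemma scaler_eq0_div (c : K) (v : V) : c *: v = 0 -> c = 0 \/ v = 0.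
Proof.
case: (eqVneq c 0) => [-> _|hc h]; first by left.
by right; rewrite -(scalerKV_div v hc) h scaler0.
Qed.

Lemma eliminate_scale (x1 x2 v : V) (a1 a2 : K) : a2 != 0 ->
  (x1 + a1 *: v) - (a1 * a2^-1) *: (x2 + a2 *: v) = x1 - (a1 * a2^-1) *: x2.
Proof.
by move=> h; rewrite scalerDr scalerA -mulrA mulVf_div // mulr1 opprD addrACA subrr addr0.
Qed.

Section Subspace.
Variable X : subsp V.
Hypothesis sX : is_subspace X.

Lemma subspace0 : X 0. Proof. by case: sX. Qed.

Lemma subspaceD x y : X x -> X y -> X (x + y).
Proof. by move=> hx hy; have := sX.2 1 x y hx hy; rewrite scale1r. Qed.

Lemma subspaceZ a x : X x -> X (a *: x).
Proof. by move=> hx; have := sX.2 a x 0 hx subspace0; rewrite addr0. Qed.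

Lemma subspaceN x : X x -> X (- x).
Proof. rewrite -scaleN1r; exact: subspaceZ. Qed.

Lemma subspaceB x y : X x -> X y -> X (x - y).
Proof. by move=> hx hy; apply: subspaceD => //; exact: subspaceN. Qed.

Lemma subspace_scale_notin c v : ~ X v -> X (c *: v) -> c = 0.
Proof.
move=> nv hcv; case: (eqVneq c 0) => // hc; case: nv.
by rewrite -(scalerKV_div v hc); exact: subspaceZ.
Qed.

End Subspace.

Lemma sincl_ssuml (X Y : subsp V) : is_subspace Y -> sincl X (ssum X Y).
Proof. by move=> sY x Xx; exists x, 0; rewrite addr0; split=> //; split=> //; exact: subspace0. Qed.

Lemma sincl_ssumr (X Y : subsp V) : is_subspace X -> sincl Y (ssum X Y).
Proof. by move=> sX y Yy; exists 0, y; rewrite add0r; split=> //; exact: subspace0. Qed.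

Lemma ssumC (X Y : subsp V) : ssum X Y = ssum Y X.
Proof.
by apply: subsp_ext => v; split=> -[x [y [hx [hy ->]]]]; exists y, x; rewrite addrC.
Qed.

Lemma distant_notin (X Y : subsp V) v : distant X Y -> Y v -> v != 0 -> ~ X v.
Proof. by move=> [cap _] Yv /eqP nv Xv; apply: nv; exact: cap. Qed.

Lemma not_distant_common (X Y : subsp V) z : X z -> Y z -> z != 0 -> ~ distant X Y.
Proof. by move=> Xz Yz /eqP nz [cap _]; apply: nz; exact: cap. Qed.

Lemma distant_sub_eq (X Y : subsp V) u v : distant X Y -> X (u - v) -> Y (u - v) -> u = v.
Proof. by move=> [cap _] hX hY; apply/eqP; rewrite -subr_eq0; apply/eqP; exact: cap. Qed.

Lemma distant_transversal (F X : subsp V) q : is_subspace X -> distant F X ->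
  exists e, X e /\ F (e + q).
Proof.
move=> sX [_ sumFX]; have [x [y [Fx [Xy ->]]]] := sumFX q.
by exists (- y); split; [exact: subspaceN | rewrite addrC addrK].
Qed.

Definition span2 (x y : V) : subsp V := fun v => exists a b : K, v = a *: x + b *: y.

Definition independent2 (x y : V) := forall a b : K, a *: x + b *: y = 0 -> a = 0 /\ b = 0.

Definition dependent3 (u v w : V) :=
  exists a b c : K, a *: u + b *: v + c *: w = 0 /\ (a != 0 \/ b != 0 \/ c != 0).

Lemma span2_subspace (x y : V) : is_subspace (span2 x y).
Proof.
split; first by exists 0, 0; rewrite !scale0r addr0.
move=> a u v [a1 [b1 ->]] [a2 [b2 ->]]; exists (a * a1 + a2), (a * b1 + b2).
by rewrite scalerDr !scalerA !scalerDl addrACA.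
Qed.

Lemma line_subspace (L : subsp V) : is_line L -> is_subspace L.
Proof. by move=> [u [w [_ ->]]]; exact: span2_subspace. Qed.

Lemma span2_sub (X : subsp V) x y v : is_subspace X -> X x -> X y -> span2 x y v -> X v.
Proof. by move=> sX Xx Xy [a [b ->]]; apply: subspaceD => //; exact: subspaceZ. Qed.

Lemma dependent2_multiples (y u v : V) (b1 b2 : K) : u = b1 *: y -> v = b2 *: y ->
  exists a b : K, a *: u + b *: v = 0 /\ (a != 0 \/ b != 0).
Proof.
move=> -> ->; case: (eqVneq b1 0) => [->|h].
  exists 1, 0; rewrite !scale0r scaler0 addr0; split=> //; left; exact: oner_neq0.
exists (- (b2 * b1^-1)), 1; split; last by right; exact: oner_neq0.
by rewrite scale1r !scalerA mulNr -mulrA mulVf_div // mulr1 scaleNr addNr.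
Qed.

Lemma span2_dependent3_lead (x y u v w : V) (a1 b1 : K) : a1 != 0 ->
  u = a1 *: x + b1 *: y -> span2 x y v -> span2 x y w -> dependent3 u v w.
Proof.
move=> ha hu [a2 [b2 hv]] [a3 [b3 hw]].
set c2 := a2 * a1^-1; set c3 := a3 * a1^-1.
have ev : v - c2 *: u = (b2 - c2 * b1) *: y.
  rewrite hv hu [a2 *: x + _]addrC [a1 *: x + _]addrC eliminate_scale //.
  by rewrite scalerBl scalerA.
have ew : w - c3 *: u = (b3 - c3 * b1) *: y.
  rewrite hw hu [a3 *: x + _]addrC [a1 *: x + _]addrC eliminate_scale //.
  by rewrite scalerBl scalerA.
have [al [be [h1 h2]]] := dependent2_multiples ev ew.
exists (- (al * c2 + be * c3)), al, be; split; last by right.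
rewrite -h1 !scalerBr !scalerA scaleNr scalerDl opprD.
by rewrite [RHS]addrACA -[LHS]addrA [LHS]addrC.
Qed.

Lemma span2_dependent3 (x y u v w : V) :
  span2 x y u -> span2 x y v -> span2 x y w -> dependent3 u v w.
Proof.
move=> hu hv hw.
case: (hu) => [a1 [b1 eu]]; case: (hv) => [a2 [b2 ev]].
case: (eqVneq a1 0) => h1; last exact: span2_dependent3_lead h1 eu hv hw.
case: (eqVneq a2 0) => h2.
  have eu' : u = b1 *: y by rewrite eu h1 scale0r add0r.
  have ev' : v = b2 *: y by rewrite ev h2 scale0r add0r.
  have [a [b [e1 e2]]] := dependent2_multiples eu' ev'.
  exists a, b, 0; rewrite scale0r addr0; split=> //.
  by case: e2; auto.
have [a [b [c [e1 e2]]]] := span2_dependent3_lead h2 ev hu hw.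
exists b, a, c; split; first by rewrite -e1 [b *: u + _]addrC.
by case: e2 => [?|[?|?]]; auto.
Qed.

Lemma span2_not_full (x y : V) : dim_gt2 V -> ~ (forall t, span2 x y t).
Proof.
move=> [u [v [w hind]]] hfull.
have [a [b [c [e1 e2]]]] := span2_dependent3 (hfull u) (hfull v) (hfull w).
have [ha hb hc] := hind _ _ _ e1.
by move: e2; rewrite ha hb hc eqxx; case=> [|[|]].
Qed.

Lemma distant_independent2 (X Y : subsp V) p q : is_subspace X -> is_subspace Y ->
  distant X Y -> X p -> Y q -> p != 0 -> q != 0 -> independent2 p q.
Proof.
move=> sX sY [cap _] Xp Yq /eqP np /eqP nq a b h.
have bq : b *: q = - (a *: p) by rewrite -[b *: q](addKr (a *: p)) h addr0.
have : b *: q = 0.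
  by apply: cap; [rewrite bq; apply: subspaceN => //; exact: subspaceZ | exact: subspaceZ].
case/scaler_eq0_div => [b0|] //; move: h; rewrite b0 scale0r addr0.
by case/scaler_eq0_div.
Qed.

Lemma span2_of_independent2 (p q u w r : V) : independent2 p q ->
  span2 u w p -> span2 u w q -> span2 u w r -> span2 p q r.
Proof.
move=> ipq Lp Lq Lr; have [a [b [c [e1 e2]]]] := span2_dependent3 Lr Lp Lq.
case: (eqVneq a 0) => ha.
  move: e1; rewrite ha scale0r add0r => /ipq [b0 c0].
  by move: e2; rewrite ha b0 c0 eqxx; case=> [|[|]].
have ar : a *: r = - (b *: p + c *: q) by apply/eqP; rewrite -addr_eq0 addrA e1.
exists (- (a^-1 * b)), (- (a^-1 * c)).
by rewrite -(scalerKV_div r ha) ar scalerN scalerDr !scalerA opprD !scaleNr.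
Qed.

Lemma meets_vector (L X : subsp V) : meets L X -> exists z, [/\ z != 0, L z & X z].
Proof.
move=> [P [[z [nz ->]] [PL PX]]]; exists z.
by split=> //; [apply: PL | apply: PX]; exists 1; rewrite scale1r.
Qed.

Lemma meets_of_vector (L X : subsp V) z : is_subspace L -> is_subspace X ->
  z != 0 -> L z -> X z -> meets L X.
Proof.
move=> sL sX nz Lz Xz; exists (sspan1 z); split; first by exists z.
by split=> v [a ->]; exact: subspaceZ.
Qed.

Lemma meets_span2_transversal (X Y : subsp V) p q e : is_subspace X -> is_subspace Y ->
  distant Y X -> X p -> X e -> Y (e + q) -> meets (span2 p q) Y -> exists c, e = c *: p.
Proof.
move=> sX sY dYX Xp Xe Yeq /meets_vector [z [nz [a [b ez]] Yz]].
have nb : b != 0.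
  apply/eqP=> b0; move/eqP: nz; apply; case: dYX => cap _; apply: cap => //.
  by rewrite ez b0 scale0r addr0; exact: subspaceZ.
exists (b^-1 * a); symmetry; apply: (distant_sub_eq dYX).
- have -> : (b^-1 * a) *: p - e = b^-1 *: z - (e + q).
    by rewrite ez scalerDr !scalerA mulVf_div // scale1r opprD addrACA subrr addr0.
  by apply: subspaceB => //; exact: subspaceZ.
- by apply: subspaceB => //; exact: subspaceZ.
Qed.

Lemma codim1_decomp (X S : subsp V) w w' : is_subspace X -> codim1 X S ->
  S w -> ~ X w -> S w' -> exists c, X (w' - c *: w).
Proof.
move=> sX [_ [v [_ [_ ->]]]] [x0 [y0 [hx0 [[a0 ->] ->]]]] nw [x1 [y1 [hx1 [[a1 ->] ->]]]].
have ha0 : a0 != 0 by apply/eqP=> h0; apply: nw; rewrite h0 scale0r addr0.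
exists (a1 * a0^-1); rewrite eliminate_scale //.
by apply: subspaceB => //; exact: subspaceZ.
Qed.

Lemma codim1_witness (X Y : subsp V) : is_subspace Y -> codim1 Y (ssum X Y) ->
  exists x, X x /\ ~ Y x.
Proof.
move=> sY [_ [_ [[x [y [Xx [Yy ->]]]] [nxy _]]]].
by exists x; split=> // Yx; apply: nxy; exact: subspaceD.
Qed.

Lemma codim1_ssum (X Y : subsp V) y : is_subspace X -> is_subspace Y -> Y y -> ~ X y ->
  (forall v, Y v -> exists c, X (v - c *: y)) -> codim1 X (ssum X Y).
Proof.
move=> sX sY Yy nXy hy; split; first exact: sincl_ssuml.
exists y; split; first exact: sincl_ssumr.
split=> //; apply: subsp_ext => v; split.
- move=> [x [y' [Xx [Yy' ->]]]]; have [c hc] := hy _ Yy'.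
  exists (x + (y' - c *: y)), (c *: y); split; first exact: subspaceD.
  by split; [exists c | rewrite -addrA subrK].
- move=> [x [z [Xx [[a ->] ->]]]]; exists x, (a *: y).
  by split=> //; split=> //; exact: subspaceZ.
Qed.

Lemma adjacent_of_decomp (X Y : subsp V) x y : is_subspace X -> is_subspace Y ->
  X x -> Y y -> ~ X y -> ~ Y x ->
  (forall v, Y v -> exists c, X (v - c *: y)) ->
  (forall v, X v -> exists c, Y (v - c *: x)) -> adjacent X Y.
Proof.
move=> sX sY Xx Yy nXy nYx hy hx.
by split; [exact: codim1_ssum hy | rewrite ssumC; exact: codim1_ssum hx].
Qed.

Section Adjacent.
Variables (E0 W : subsp V).
Hypotheses (sE0 : is_subspace E0) (sW : is_subspace W) (hadj : adjacent W E0).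

Lemma adjacent_witness : exists w, W w /\ ~ E0 w.
Proof. exact: codim1_witness sE0 hadj.2. Qed.

Lemma adjacent_decompl w w' : W w -> ~ E0 w -> W w' -> exists c, E0 (w' - c *: w).
Proof.
move=> Ww nw Ww'.
by apply: (codim1_decomp sE0 hadj.2) nw _; exact: sincl_ssuml.
Qed.

Lemma adjacent_decompr z x : E0 z -> ~ W z -> E0 x -> exists c, W (x - c *: z).
Proof.
move=> E0z nz E0x.
by apply: (codim1_decomp sW hadj.1) nz _; exact: sincl_ssumr.
Qed.

Lemma adjacent_not_distant : dim_gt2 V -> ~ distant W E0.
Proof.
move=> hdim dWE0; have [cap sum] := dWE0.
have [w0 [Ww0 nw0]] := adjacent_witness.
have Wspan y : W y -> exists c, y = c *: w0.
  move=> Wy; have [c hc] := adjacent_decompl Ww0 nw0 Wy.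
  by exists c; apply: (distant_sub_eq dWE0) => //; apply: subspaceB => //; exact: subspaceZ.
have [z E0span] : exists z, forall x, E0 x -> exists c, x = c *: z.
  case: (classic (exists z, E0 z /\ ~ W z)) => [[z [E0z nz]]|nex].
    exists z => x E0x; have [c hc] := adjacent_decompr E0z nz E0x.
    by exists c; apply: (distant_sub_eq dWE0) => //; apply: subspaceB => //; exact: subspaceZ.
  exists 0 => x E0x; exists 0; rewrite scaler0; apply: cap => //.
  by apply: NNPP => nx; apply: nex; exists x.
apply: (span2_not_full (x := w0) (y := z) hdim) => t.
have [y [x [Wy [E0x ->]]]] := sum t.
by have [a ->] := Wspan _ Wy; have [b ->] := E0span _ E0x; exists a, b.
Qed.

Lemma adjacent_meet (E1 : subsp V) : is_subspace E1 -> distant E0 E1 ->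
  ~ distant W E1 -> exists q, [/\ W q, E1 q & q != 0].
Proof.
move=> sE1 [_ sum01] nd; apply: NNPP => nq; apply: nd; split.
  by move=> v Wv E1v; apply: NNPP => /eqP nv; apply: nq; exists v.
have [w [Ww nw]] := adjacent_witness.
have [a [b [E0a [E1b ew]]]] := sum01 w.
have nWa : ~ W a.
  move=> Wa; apply: nq; exists b; split=> //.
  - have -> : b = w - a by rewrite ew addrC addKr.
    exact: subspaceB.
  - by apply/eqP=> b0; apply: nw; rewrite ew b0 addr0.
move=> v; have [x [y [E0x [E1y ->]]]] := sum01 v.
have [c Wxc] := adjacent_decompr E0a nWa E0x.
exists (x - c *: a + c *: w), (y - c *: b); split.
  by apply: subspaceD => //; exact: subspaceZ.
split; first by apply: subspaceB => //; exact: subspaceZ.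
by rewrite ew scalerDr [x - _ + _]addrA addrNK addrACA subrr addr0.
Qed.

Lemma adjacent_distant_of_notin (F : subsp V) q e : is_subspace F -> distant F E0 ->
  W q -> ~ E0 q -> E0 e -> F (e + q) -> ~ W e -> distant W F.
Proof.
move=> sF dF0 Wq nE0q E0e Feq nWe; split.
  move=> v Wv Fv; have [c E0vc] := adjacent_decompl Wq nE0q Wv.
  case: (eqVneq c 0) => hc0.
    by case: dF0 => cap _; apply: cap => //; move: E0vc; rewrite hc0 scale0r subr0.
  case: nWe; have -> : e = c^-1 *: (v - c *: q).
    apply: (distant_sub_eq dF0); last by apply: subspaceB => //; exact: subspaceZ.
    have -> : e - c^-1 *: (v - c *: q) = (e + q) - c^-1 *: v.
      by rewrite scalerBr scalerKV_div // opprB addrA addrC [_ + q]addrC addrA.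
    by apply: subspaceB => //; exact: subspaceZ.
  by apply: subspaceZ => //; apply: subspaceB => //; exact: subspaceZ.
move=> v; have [f [x [Ff [E0x ->]]]] := dF0.2 v.
have [c Wxc] := adjacent_decompr E0e nWe E0x.
exists ((x - c *: e) - c *: q), (f + c *: (e + q)); split.
  by apply: subspaceB => //; exact: subspaceZ.
split; first by apply: subspaceD => //; exact: subspaceZ.
by rewrite scalerDr -[x - _ - _]addrA -opprD addrACA addNr addr0 addrC.
Qed.

End Adjacent.

Lemma D2_of_R2 (S : subsp V -> Prop) : dim_gt2 V -> subsetG S -> R1 S -> R2 S -> D2 S.
Proof.
move=> hdim hSG [hd _] hR2 E0 E1 E2 S0 S1 S2 n01 n02 n12 W [sW _] hadj nd1 nd2 E SE.
have sp X : S X -> is_subspace X by move=> /hSG [].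
have sE0 := sp _ S0; have sE1 := sp _ S1; have sE2 := sp _ S2; have sE := sp _ SE.
case: (classic (E = E0)) => [->|nE0]; first exact: adjacent_not_distant.
have d01 := hd _ _ S0 S1 n01; have d20 := hd _ _ S2 S0 (nesym n02).
have dE0 := hd _ _ SE S0 nE0.
have [q [Wq E1q nq]] := adjacent_meet sE0 sW hadj sE1 d01 nd1.
have nE0q : ~ E0 q := distant_notin d01 E1q nq.
have [p [E0p E2pq]] := distant_transversal q sE0 d20.
have Wp : W p.
  by apply: NNPP => nWp; case: nd2; exact: adjacent_distant_of_notin d20 Wq nE0q E0p E2pq nWp.
have np : p != 0.
  apply/eqP=> p0; move: E2pq; rewrite p0 add0r.
  exact: distant_notin (hd _ _ S2 S1 (nesym n12)) E1q nq.
have ipq : independent2 p q := distant_independent2 sE0 sE1 d01 E0p E1q np nq.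
have npq : p + q != 0.
  apply/eqP=> h; have [/eqP] : (1 : K) = 0 /\ (1 : K) = 0 by apply: ipq; rewrite !scale1r.
  by rewrite oner_eq0.
have sL := span2_subspace p q.
have mE : meets (span2 p q) E.
  apply: (hR2 _ _ E0 E1 E2) => //; first by exists p, q.
  - by apply: (meets_of_vector sL sE0 np) => //; exists 1, 0; rewrite scale1r scale0r addr0.
  - by apply: (meets_of_vector sL sE1 nq) => //; exists 0, 1; rewrite scale1r scale0r add0r.
  - by apply: (meets_of_vector sL sE2 npq) => //; exists 1, 1; rewrite !scale1r.
have [e [E0e Eeq]] := distant_transversal q sE0 dE0.
have [c ec] := meets_span2_transversal sE0 sE dE0 E0p E0e Eeq mE.
have Weq : W (e + q) by rewrite ec; apply: subspaceD => //; exact: subspaceZ.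
apply: (not_distant_common Weq Eeq); apply/eqP=> h; apply: nE0q.
by rewrite -[q](addKr e) h addr0; exact: subspaceN.
Qed.

Section AvoidingHyperplane.
Variables (p d e : V).

Definition avoiding (A : subsp V) := [/\ is_subspace A, A p, A d & ~ A e].

Lemma avoiding_chain_bigcup (F : subsp V -> Prop) :
  (forall X, F X -> X = (fun _ => False) \/ avoiding X) ->
  (forall X Y, F X -> F Y -> sincl X Y \/ sincl Y X) ->
  forall X0, F X0 -> avoiding X0 -> avoiding (fun v => exists2 X, F X & X v).
Proof.
move=> hF tot X0 FX0 [sX0 pX0 dX0 eX0].
have avF X v : F X -> X v -> avoiding X.
  by move=> FX Xv; case: (hF X FX) => // X0e; rewrite X0e in Xv.
split; [split | exists X0 | exists X0 | ] => //.
- by exists X0 => //; exact: subspace0.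
- move=> a x y [X1 FX1 X1x] [X2 FX2 X2y].
  have [s1 _ _ _] := avF _ _ FX1 X1x; have [s2 _ _ _] := avF _ _ FX2 X2y.
  case: (tot X1 X2 FX1 FX2) => sub.
    by exists X2 => //; apply: s2.2 => //; exact: sub.
  by exists X1 => //; apply: s1.2 => //; exact: sub.
- by move=> [X FX Xe]; have [_ _ _] := avF _ _ FX Xe; apply.
Qed.

Lemma avoiding_maximal : ~ span2 p d e ->
  exists A, avoiding A /\ forall B, classical_sets.proper A B -> ~ avoiding B.
Proof.
move=> nspan.
(* P must also contain the empty set, the union of the empty chain. *)
pose P (A : subsp V) := A = (fun _ => False) \/ avoiding A.
have avL : avoiding (span2 p d).
  split; [exact: span2_subspace | | | exact: nspan].
  - by exists 1, 0; rewrite scale1r scale0r addr0.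
  - by exists 0, 1; rewrite scale1r scale0r add0r.
have chain F : classical_sets.subset F P -> classical_sets.total_on F classical_sets.subset ->
    P (classical_sets.bigcup F id).
  move=> FP tot; case: (classic (exists X, F X /\ avoiding X)) => [[X0 [FX0 avX0]]|nex].
    by right; exact: avoiding_chain_bigcup FP tot X0 FX0 avX0.
  left; apply: subsp_ext => v; split=> // -[X FX Xv]; apply: nex; exists X; split=> //.
  by case: (FP X FX) => // X0; rewrite X0 in Xv.
have [A [[A0|avA] maxA]] := classical_sets.Zorn_bigcup chain; last first.
  by exists A; split=> // B /maxA nPB avB; apply: nPB; right.
case: (maxA (span2 p d)); last by right.
split; first by rewrite A0.
by move=> h; have := h p; rewrite A0; apply; case: avL.
Qed.

Lemma avoiding_maximal_complement A : avoiding A ->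
  (forall B, classical_sets.proper A B -> ~ avoiding B) -> forall v, exists c, A (v - c *: e).
Proof.
move=> [sA pA dA eA] maxA v; apply: NNPP => nex.
have nAv : ~ A v by move=> h; apply: nex; exists 0; rewrite scale0r subr0.
pose B v' := exists m a, A m /\ v' = m + a *: v.
apply: (maxA B).
  split; first by move=> x Ax; exists x, 0; rewrite scale0r addr0.
  move=> h; apply: nAv; apply: h; exists 0, 1.
  by rewrite scale1r add0r; split=> //; exact: subspace0.
split; [split | exists p, 0 | exists d, 0 | ]; rewrite ?scale0r ?addr0 //.
- by exists 0, 0; rewrite scale0r addr0; split=> //; exact: subspace0.
- move=> a x y [m1 [a1 [Am1 ->]]] [m2 [a2 [Am2 ->]]].
  exists (a *: m1 + m2), (a * a1 + a2); split; first exact: sA.2.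
  by rewrite scalerDr !scalerA scalerDl addrACA.
- move=> [m [a [Am em]]]; case: (eqVneq a 0) => ha.
    by apply: eA; rewrite em ha scale0r addr0.
  apply: nex; exists a^-1.
  have -> : v - a^-1 *: e = - (a^-1 *: m).
    by rewrite em scalerDr scalerKV_div // opprD addrA addrAC subrr add0r.
  by apply: subspaceN => //; exact: subspaceZ.
Qed.

Lemma exists_hyperplane_avoiding : ~ span2 p d e ->
  exists M, avoiding M /\ forall v, exists c, M (v - c *: e).
Proof.
move=> /avoiding_maximal [M [avM maxM]].
by exists M; split=> //; exact: avoiding_maximal_complement.
Qed.

End AvoidingHyperplane.

Lemma inG_linear_preimage (X : subsp V) (g g' : V -> V) :
  (forall u v, g (u + v) = g u + g v) -> (forall a v, g (a *: v) = a *: g v) ->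
  (forall u v, g' (u + v) = g' u + g' v) -> (forall a v, g' (a *: v) = a *: g' v) ->
  cancel g g' -> cancel g' g -> inG X -> inG (fun v => X (g v)).
Proof.
move=> gD gZ g'D g'Z gK g'K [[X0 Xlin] [f [fD [fZ [fim fker]]]]].
have g0 : g 0 = 0 by have := gZ 0 0; rewrite !scale0r.
have g'0 : g' 0 = 0 by have := g'Z 0 0; rewrite !scale0r.
split; first by split=> [|a x y hx hy]; rewrite ?g0 ?gD ?gZ //; exact: Xlin.
exists (fun v => g' (f (g v))); split; first by move=> u v; rewrite gD fD g'D.
split; first by move=> a v; rewrite gZ fZ g'Z.
split.
  move=> w; split.
    by move=> /fim [v fv]; exists (g' v); rewrite g'K fv gK.
  by move=> [v <-]; rewrite g'K; apply/fim; exists (g v).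
move=> v; rewrite -fker; split; last by move=> ->.
by move=> h; rewrite -[f _]g'K h g0.
Qed.

Section Shear.
Variables (M : subsp V) (e q : V).
Hypotheses (sM : is_subspace M) (nMe : ~ M e)
  (compl : forall v, exists c, M (v - c *: e)) (Mqe : M (q - e)).

Definition ecoord v : K := projT1 (constructive_indefinite_description _ (compl v)).

Lemma ecoordP v : M (v - ecoord v *: e).
Proof. exact: (projT2 (constructive_indefinite_description _ (compl v))). Qed.

Lemma ecoord_uniq v c : M (v - c *: e) -> ecoord v = c.
Proof.
move=> h; apply/eqP; rewrite -subr_eq0; apply/eqP.
apply: (subspace_scale_notin sM nMe).
have -> : (ecoord v - c) *: e = (v - c *: e) - (v - ecoord v *: e).
  by rewrite opprB [RHS]addrC [RHS]addrA addrNK scalerBl.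
by apply: subspaceB => //; exact: ecoordP.
Qed.

Lemma ecoord_linear a v w : ecoord (a *: v + w) = a * ecoord v + ecoord w.
Proof.
apply: ecoord_uniq.
have -> : a *: v + w - (a * ecoord v + ecoord w) *: e =
    a *: (v - ecoord v *: e) + (w - ecoord w *: e).
  by rewrite scalerDl opprD addrACA scalerBr scalerA.
by apply: sM.2; exact: ecoordP.
Qed.

Lemma ecoord_eq0 v : M v -> ecoord v = 0.
Proof. by move=> h; apply: ecoord_uniq; rewrite scale0r subr0. Qed.

Lemma ecoordD v w : ecoord (v + w) = ecoord v + ecoord w.
Proof. by have := ecoord_linear 1 v w; rewrite scale1r mul1r. Qed.

Lemma ecoordZ a v : ecoord (a *: v) = a * ecoord v.
Proof.
by have := ecoord_linear a v 0; rewrite addr0 (ecoord_eq0 (subspace0 sM)) addr0.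
Qed.

Lemma ecoordq : ecoord q = 1.
Proof. by apply: ecoord_uniq; rewrite scale1r. Qed.

(* Fixes M pointwise and sends e to q. *)
Definition shear v := v + ecoord v *: (q - e).
Definition unshear v := v - ecoord v *: (q - e).

Lemma ecoord_shear v : ecoord (shear v) = ecoord v.
Proof. by rewrite /shear ecoordD ecoordZ (ecoord_eq0 Mqe) mulr0 addr0. Qed.

Lemma ecoord_unshear v : ecoord (unshear v) = ecoord v.
Proof. by rewrite /unshear ecoordD -scaleNr ecoordZ (ecoord_eq0 Mqe) mulr0 addr0. Qed.

Lemma shearK : cancel shear unshear.
Proof. by move=> v; rewrite /unshear ecoord_shear /shear addrK. Qed.

Lemma unshearK : cancel unshear shear.
Proof. by move=> v; rewrite /shear ecoord_unshear /unshear subrK. Qed.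

Lemma shearD u v : shear (u + v) = shear u + shear v.
Proof. by rewrite /shear ecoordD scalerDl addrACA. Qed.

Lemma shearZ a v : shear (a *: v) = a *: shear v.
Proof. by rewrite /shear ecoordZ [RHS]scalerDr scalerA. Qed.

Lemma unshearD u v : unshear (u + v) = unshear u + unshear v.
Proof. by rewrite /unshear ecoordD scalerDl opprD addrACA. Qed.

Lemma unshearZ a v : unshear (a *: v) = a *: unshear v.
Proof. by rewrite /unshear ecoordZ [RHS]scalerBr scalerA. Qed.

Definition shear_image (X : subsp V) : subsp V := fun v => X (unshear v).

Lemma shear_image_inG X : inG X -> inG (shear_image X).
Proof. exact: inG_linear_preimage unshearD unshearZ shearD shearZ unshearK shearK. Qed.

Section ShearImage.
Variable X : subsp V.
Hypotheses (sX : is_subspace X) (Xe : X e) (nXq : ~ X q).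

Lemma shear_imageP v : shear_image X v <-> exists h c, [/\ M h, X h & v = h + c *: q].
Proof.
split.
  move=> Xv; exists (unshear v - ecoord v *: e), (ecoord v); split.
  - by have := ecoordP (unshear v); rewrite ecoord_unshear.
  - by apply: subspaceB => //; exact: subspaceZ.
  - by rewrite -{1}(unshearK v) /shear ecoord_unshear scalerBr addrA addrAC.
move=> [h [c [Mh Xh ->]]].
rewrite /shear_image /unshear ecoordD ecoordZ ecoordq ecoord_eq0 // add0r mulr1.
rewrite scalerBr opprB -addrA [c *: q + _]addrC subrK.
by apply: subspaceD => //; exact: subspaceZ.
Qed.

Lemma shear_image_q : shear_image X q.
Proof. by apply/shear_imageP; exists 0, 1; rewrite scale1r add0r; split=> //; exact: subspace0. Qed.

Lemma shear_image_fix v : M v -> X v -> shear_image X v.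
Proof. by move=> Mv Xv; apply/shear_imageP; exists v, 0; rewrite scale0r addr0. Qed.

Lemma shear_image_subspace : is_subspace (shear_image X).
Proof.
split; first exact: shear_image_fix (subspace0 sM) (subspace0 sX).
move=> a x y; rewrite /shear_image unshearD unshearZ; exact: sX.2.
Qed.

Lemma shear_image_notin : ~ shear_image X e.
Proof.
move/shear_imageP=> [h [c [Mh Xh he]]]; apply: nMe.
have c0 : c = 0.
  apply: (subspace_scale_notin sX nXq).
  have -> : c *: q = e - h by rewrite he addrC addKr.
  exact: subspaceB.
by rewrite he c0 scale0r addr0.
Qed.

Lemma shear_image_adjacent : adjacent (shear_image X) X.
Proof.
apply: (adjacent_of_decomp shear_image_subspace sX shear_image_q Xe shear_image_notin nXq).
- move=> v Xv; have [c Mvc] := compl v; exists c.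
  by apply: shear_image_fix => //; apply: subspaceB => //; exact: subspaceZ.
- by move=> v /shear_imageP [h [c [_ Xh ->]]]; exists c; rewrite addrK.
Qed.

End ShearImage.

End Shear.

Lemma R2_of_D2 (S : subsp V -> Prop) : subsetG S -> R1 S -> D2 S -> R2 S.
Proof.
move=> hSG [hd _] hD2 L hL E0 E1 E2 S0 S1 S2 n01 n02 n12 m0 m1 m2 E SE.
apply: NNPP => nmE.
have sp X : S X -> is_subspace X by move=> /hSG [].
have sE0 := sp _ S0; have sE1 := sp _ S1; have sE2 := sp _ S2; have sE := sp _ SE.
have sL := line_subspace hL.
have nE0 : E <> E0 by move=> h; apply: nmE; rewrite h.
have d01 := hd _ _ S0 S1 n01; have dE0 := hd _ _ SE S0 nE0.
have [p [np Lp E0p]] := meets_vector m0.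
have [q [nq Lq E1q]] := meets_vector m1.
have [r [nr Lr E2r]] := meets_vector m2.
have nE0q : ~ E0 q := distant_notin d01 E1q nq.
have [e [E0e Eeq]] := distant_transversal q sE0 dE0.
have neq : e + q != 0.
  by apply/eqP=> h; apply: nE0q; rewrite -[q](addKr e) h addr0; exact: subspaceN.
(* Otherwise e, hence e + q, would lie on L. *)
have nspan : ~ span2 p (q - e) e.
  move=> [a [b he]].
  have b0 : b = 0.
    apply: (subspace_scale_notin sE0 nE0q).
    have -> : b *: q = e - a *: p + b *: e.
      by rewrite {1}he scalerBr [a *: p + _]addrC addrK subrK.
    by apply: (subspaceD sE0); [apply: (subspaceB sE0) => //|]; exact: subspaceZ.
  move: he; rewrite b0 scale0r addr0 => he.
  apply: nmE; apply: (meets_of_vector sL sE neq) => //.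
  by rewrite he; apply: subspaceD => //; exact: subspaceZ.
have [M [[sM Mp Mqe nMe] compl]] := exists_hyperplane_avoiding nspan.
pose W := shear_image q compl E0.
have WG : inG W := shear_image_inG sM nMe compl Mqe (hSG _ S0).
have Wq : W q by exact: shear_image_q.
have Wp : W p by exact: shear_image_fix.
have hadj : adjacent W E0 by exact: shear_image_adjacent.
have Wr : W r.
  case: hL Lp Lq Lr => [u [w [_ ->]]] Lp Lq Lr.
  apply: (span2_sub WG.1 Wp Wq).
  exact: span2_of_independent2 (distant_independent2 sE0 sE1 d01 E0p E1q np nq) Lp Lq Lr.
apply: (hD2 E0 E1 E2 S0 S1 S2 n01 n02 n12 W WG hadj) SE _.
- exact: not_distant_common Wq E1q nq.
- exact: not_distant_common Wr E2r nr.
- have nWe : ~ W e by exact: shear_image_notin.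
  exact: (adjacent_distant_of_notin sE0 WG.1 hadj sE dE0 Wq nE0q E0e Eeq nWe).
Qed.

Lemma R2_iff_D2 (S : subsp V -> Prop) : dim_gt2 V -> subsetG S -> R1 S ->
  R2 S <-> D2 S.
Proof. by move=> hdim hSG h1; split; [exact: D2_of_R2 | exact: R2_of_D2]. Qed.

End Regulus.

Theorem theorem4p10 (K : unitRingType) (V : lmodType K)
  (hK : division_ring K) (hdim : dim_gt2 V) (hG : exists X : subsp V, inG X)
  (R : subsp V -> Prop) (hR : subsetG R) :
  Z_regulus R <-> [/\ D1 R, D2 R & D3 R].
Proof.
have R2D2 S : subsetG S -> R1 S -> R2 S <-> D2 S := R2_iff_D2 hK hdim.
split=> [[_ h1 h2 h3] | [h1 h2 h3]].
  split; [exact: h1 | exact/R2D2 |].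
  by move=> S hS s1 s2 sub; apply: h3 => //; exact/R2D2.
split; [exact: hR | exact: h1 | exact/R2D2 |].
by move=> S hS s1 s2 sub; apply: h3 => //; exact/R2D2.
Qed.
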